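(* Let $d\ge 1$ and $n\ge 0$ be integers, let $N:=\dim \mathbb{C}_n[z]$, where $\mathbb{C}_n[z]$ denotes the space of polynomials in $d$ complex variables of total degree at most $n$, and let $A=\{x_1,\dots,x_N\}\subset\mathbb{C}^d$ be a set of $N$ distinct points that is unisolvent for polynomial interpolation, i.e. for all $y_1,\dots,y_N\in\mathbb{C}$ there is a unique $p\in\mathbb{C}_n[z]$ with $p(x_i)=y_i$ for $1\le i\le N$. Let $z_0\in\mathbb{C}^d\setminus A$, and let $\ell_1,\dots,\ell_N\in\mathbb{C}_n[z]$ be the fundamental Lagrange interpolating polynomials for these points ($\ell_i(x_j)=\delta_{ij}$). Then among all discrete probability measures supported at the points $x_1,\dots,x_N$, the measure $\mu=\sum_{i=1}^N w_i\delta_{x_i}$ with \[ w_i:=\frac{|\ell_i(z_0)|}{\sum_{j=1}^N|\ell_j(z_0)|},\qquad 1\le i\le N, \] minimizes $K_n^\mu(z_0,z_0)$.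
   Context: For a probability measure $\mu$ that is non-degenerate on $\mathbb{C}_n[z]$ (i.e. $\int|p|^2\,d\mu>0$ for every nonzero $p\in\mathbb{C}_n[z]$), $K_n^\mu(z,z):=\sum_{k=1}^N|q_k(z)|^2$, where $\{q_1,\dots,q_N\}$ is a $\mu$-orthonormal basis of $\mathbb{C}_n[z]$ (the reciprocal of the Christoffel function, or Bergman kernel, of $\mu$ on the diagonal). *)

From HB Require Import structures.
From mathcomp Require Import all_boot all_order all_algebra.
From mathcomp Require Import reals.
From mathcomp Require Import complex.
From mathcomp Require Import mpoly.
Set Implicit Arguments. Unset Strict Implicit. Unset Printing Implicit Defensive.
Import Order.TTheory GRing.Theory Num.Theory.
Local Open Scope ring_scope.

(* C_n[z] : polynomials in d complex variables of total degree <= n.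
   msize p = 1 + total degree of p (0 for p = 0). *)
Definition in_Pn (C : nzRingType) (d n : nat) (p : {mpoly C[d]}) : bool :=
  (msize p <= n.+1)%N.

Section Disc.
Variables (R : realType) (d n N : nat).
Local Notation C := (R[i]).

(* Hermitian form of the discrete measure  sum_i w_i delta_{x_i} :
   <p, q>_mu = int p conj(q) dmu = sum_i w_i p(x_i) conj(q(x_i)). *)
Definition dinner (x : 'I_N -> 'I_d -> C) (w : 'I_N -> C)
    (p q : {mpoly C[d]}) : C :=
  \sum_(i < N) w i * p.@[x i] * (q.@[x i])^*.

Definition disc_prob_weights (w : 'I_N -> C) : Prop :=
  (forall i, 0 <= w i) /\ \sum_(i < N) w i = 1.

Definition disc_nondegenerate (x : 'I_N -> 'I_d -> C) (w : 'I_N -> C) : Prop :=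
  forall p : {mpoly C[d]}, in_Pn n p -> p != 0 -> 0 < dinner x w p p.

Definition disc_orthonormal_basis (M : nat) (x : 'I_N -> 'I_d -> C) (w : 'I_N -> C)
    (q : 'I_M -> {mpoly C[d]}) : Prop :=
  [/\ forall k, in_Pn n (q k),
      forall p, in_Pn n p -> exists c : 'I_M -> C, p = \sum_(k < M) c k *: q k
    & forall k l, dinner x w (q k) (q l) = (k == l)%:R].

(* K_n^mu(z,z) computed from an orthonormal basis q *)
Definition kernel_diag (M : nat) (q : 'I_M -> {mpoly C[d]}) (z : 'I_d -> C) : C :=
  \sum_(k < M) `|(q k).@[z]| ^+ 2.

Definition unisolvent (x : 'I_N -> 'I_d -> C) : Prop :=
  forall y : 'I_N -> C, exists! p : {mpoly C[d]},
    in_Pn n p /\ forall i, p.@[x i] = y i.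
End Disc.

From HB Require Import structures.
From mathcomp Require Import all_boot all_order all_algebra.
From mathcomp Require Import reals.
From mathcomp Require Import complex.
From mathcomp Require Import mpoly.
From mathcomp Require Import ring.
Set Implicit Arguments. Unset Strict Implicit. Unset Printing Implicit Defensive.
Import Order.TTheory GRing.Theory Num.Theory.
Local Open Scope ring_scope.

(* For a discrete measure with weights w on the nodes, expanding an orthonormal
   basis in the Lagrange basis and vice versa gives the closed form
   K_n^mu(z, z) = sum_i |l_i(z)|^2 / w_i.  With a_i = |l_i(z0)| and
   S = sum_i a_i, the identity sum_i (a_i - S w_i)^2 / w_i = sum_i a_i^2 / w_i - S^2
   for probability weights shows that this is at least S^2, with equality at
   w_i = a_i / S. *)

Lemma sum_kronecker_r (F : nmodType) (N : nat) (f : 'I_N -> F) (j : 'I_N) :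
  \sum_(i < N) f i *+ (i == j) = f j.
Proof. by rewrite (bigD1 j) //= eqxx big1 ?addr0 // => i /negbTE ->. Qed.

Lemma meval_lincomb (C : comNzRingType) (d M : nat) (v : 'I_d -> C)
    (c : 'I_M -> C) (p : 'I_M -> {mpoly C[d]}) :
  (\sum_(k < M) c k *: p k).@[v] = \sum_(k < M) c k * (p k).@[v].
Proof. by rewrite raddf_sum; apply: eq_bigr => k _; exact: mevalZ. Qed.

Lemma in_Pn_lincomb (C : comNzRingType) (d n M : nat) (c : 'I_M -> C)
    (p : 'I_M -> {mpoly C[d]}) :
  (forall k, in_Pn n (p k)) -> in_Pn n (\sum_(k < M) c k *: p k).
Proof.
move=> pP; apply: leq_trans (msize_sum _ _ _) _.
by apply/bigmax_leqP => k _; apply: leq_trans (msizeZ_le _ _) (pP k).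
Qed.

Lemma sum_sqr_div_ge (F : numFieldType) (N : nat) (a w : 'I_N -> F) :
  (forall i, a i \is Num.real) -> (forall i, 0 < w i) -> \sum_(i < N) w i = 1 ->
  (\sum_(i < N) a i) ^+ 2 <= \sum_(i < N) a i ^+ 2 / w i.
Proof.
move=> aR w_gt0 w1; set S := \sum_(i < N) a i.
have S_R : S \is Num.real by apply: rpred_sum.
have excess : \sum_(i < N) (a i - S * w i) ^+ 2 / w i
    = \sum_(i < N) a i ^+ 2 / w i - S ^+ 2.
  rewrite (eq_bigr (fun i => a i ^+ 2 / w i - (S *+ 2 * a i - S ^+ 2 * w i))).
    by rewrite !sumrB -!mulr_sumr w1 -/S; ring.
  by move=> i _; field; rewrite gt_eqF ?w_gt0.
rewrite -subr_ge0 -excess; apply: sumr_ge0 => i _.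
apply: divr_ge0; last exact: ltW.
by rewrite -realEsqr rpredB ?rpredM ?aR ?S_R ?gtr0_real.
Qed.

Lemma sum_sqr_div_normalized (F : numFieldType) (N : nat) (a : 'I_N -> F) :
  (forall i, a i / \sum_(j < N) a j != 0) ->
  \sum_(i < N) a i ^+ 2 / (a i / \sum_(j < N) a j) = (\sum_(i < N) a i) ^+ 2.
Proof.
move=> w_neq0; rewrite expr2 mulr_suml; apply: eq_bigr => i _.
have := w_neq0 i; rewrite mulf_eq0 negb_or invr_eq0 => /andP[a_neq0 S_neq0].
by field; rewrite S_neq0 a_neq0.
Qed.

Section OrthonormalExpansion.
Variables (R : realType) (d n N M : nat).
Local Notation C := R[i].
Variables (x : 'I_N -> 'I_d -> C) (w : 'I_N -> C) (q : 'I_M -> {mpoly C[d]}).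

Lemma dinner_suml (c : 'I_M -> C) (p : 'I_M -> {mpoly C[d]}) r :
  dinner x w (\sum_(k < M) c k *: p k) r = \sum_(k < M) c k * dinner x w (p k) r.
Proof.
rewrite /dinner; under eq_bigr => i _ do rewrite meval_lincomb mulr_sumr mulr_suml.
rewrite exchange_big; apply: eq_bigr => k _; rewrite mulr_sumr.
by apply: eq_bigr => i _; ring.
Qed.

Hypothesis q_basis : disc_orthonormal_basis n x w q.

Lemma orthonormal_expansion p :
  in_Pn n p -> p = \sum_(k < M) dinner x w p (q k) *: q k.
Proof.
case: q_basis => _ q_span q_orth /q_span[c ->].
apply: eq_bigr => l _; rewrite dinner_suml.
under eq_bigr => k _ do rewrite q_orth mulr_natr.
by rewrite sum_kronecker_r.
Qed.

End OrthonormalExpansion.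

Section LagrangeBasis.
Variables (R : realType) (d n N : nat).
Local Notation C := R[i].
Variables (x : 'I_N -> 'I_d -> C) (ell : 'I_N -> {mpoly C[d]}).
Hypothesis x_unisolvent : unisolvent n x.
Hypothesis ell_Pn : forall i, in_Pn n (ell i).
Hypothesis ell_x : forall i j, (ell i).@[x j] = (i == j)%:R.

Lemma lagrange_expansion p : in_Pn n p -> p = \sum_(i < N) p.@[x i] *: ell i.
Proof.
move=> pP; have [r [_ r_uniq]] := x_unisolvent (fun i => p.@[x i]).
transitivity r; first by symmetry; apply: r_uniq.
apply: r_uniq; split; first exact: in_Pn_lincomb.
move=> j; rewrite meval_lincomb.
under eq_bigr => i _ do rewrite ell_x mulr_natr.
exact: sum_kronecker_r.
Qed.

Lemma dinner_lagrangel w q i : dinner x w (ell i) q = w i * (q.@[x i])^*.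
Proof.
rewrite /dinner -(sum_kronecker_r (fun j => w j * (q.@[x j])^*) i).
by apply: eq_bigr => j _; rewrite ell_x eq_sym mulr_natr mulrnAl.
Qed.

Lemma disc_weight_gt0 w : disc_nondegenerate n x w -> forall i, 0 < w i.
Proof.
move=> w_nondeg i; have := w_nondeg (ell i) (ell_Pn i).
rewrite dinner_lagrangel ell_x eqxx conjC1 mulr1; apply.
apply/eqP => ell0; have := ell_x i i.
by rewrite ell0 meval0 eqxx => /esym/eqP; rewrite oner_eq0.
Qed.

Lemma kernel_diag_lagrange M w (q : 'I_M -> {mpoly C[d]}) z :
  disc_nondegenerate n x w -> disc_orthonormal_basis n x w q ->
  kernel_diag q z = \sum_(i < N) `|(ell i).@[z]| ^+ 2 / w i.
Proof.
move=> w_nondeg q_basis; have w_gt0 := disc_weight_gt0 w_nondeg.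
have [q_Pn _ _] := q_basis.
have q_z k : (q k).@[z] = \sum_(i < N) (q k).@[x i] * (ell i).@[z].
  by rewrite {1}(lagrange_expansion (q_Pn k)) meval_lincomb.
have ell_z i : (ell i).@[z] = w i * \sum_(k < M) ((q k).@[x i])^* * (q k).@[z].
  rewrite {1}(orthonormal_expansion q_basis (ell_Pn i)) meval_lincomb mulr_sumr.
  by apply: eq_bigr => k _; rewrite dinner_lagrangel mulrA.
pose T k i := ((ell i).@[z])^* * ((q k).@[x i])^* * (q k).@[z].
have norm_q k : `|(q k).@[z]| ^+ 2 = \sum_(i < N) T k i.
  rewrite normCK {2}q_z rmorph_sum mulr_sumr.
  by apply: eq_bigr => i _; rewrite rmorphM /T /=; ring.
have norm_ell i : `|(ell i).@[z]| ^+ 2 / w i = \sum_(k < M) T k i.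
  rewrite normCK {1}ell_z mulr_sumr !mulr_suml.
  by apply: eq_bigr => k _; rewrite /T; field; rewrite gt_eqF ?w_gt0.
rewrite /kernel_diag; under eq_bigr do rewrite norm_q.
under [RHS]eq_bigr do rewrite norm_ell.
exact: exchange_big.
Qed.

End LagrangeBasis.

Theorem mainTheorem1 (R : realType) (d n N : nat)
  (x : 'I_N -> 'I_d -> R[i]) (z0 : 'I_d -> R[i])
  (ell : 'I_N -> {mpoly R[i][d]}) :
  (0 < d)%N ->
  N = 'C(n + d, d) ->
  injective x ->
  unisolvent n x ->
  (forall i, z0 <> x i) ->
  (forall i, in_Pn n (ell i)) ->
  (forall i j, (ell i).@[x j] = (i == j)%:R) ->
  let wstar := fun i : 'I_N => `|(ell i).@[z0]| / \sum_(j < N) `|(ell j).@[z0]| in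
  disc_nondegenerate n x wstar ->
  forall (w : 'I_N -> R[i]), disc_prob_weights w -> disc_nondegenerate n x w ->
  forall (qstar q : 'I_N -> {mpoly R[i][d]}),
    disc_orthonormal_basis n x wstar qstar ->
    disc_orthonormal_basis n x w q ->
    kernel_diag qstar z0 <= kernel_diag q z0.
Proof.
move=> _ _ _ x_uni _ ell_Pn ell_x wstar wstar_nondeg w [_ w1] w_nondeg
  qstar q qstar_basis q_basis.
rewrite (kernel_diag_lagrange x_uni ell_Pn ell_x _ wstar_nondeg qstar_basis).
rewrite (kernel_diag_lagrange x_uni ell_Pn ell_x _ w_nondeg q_basis).
have wstar_neq0 i : wstar i != 0.
  exact/lt0r_neq0/(disc_weight_gt0 ell_Pn ell_x wstar_nondeg).
rewrite (sum_sqr_div_normalized wstar_neq0).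
apply: sum_sqr_div_ge => [i|i|//]; first exact: normr_real.
exact: (disc_weight_gt0 ell_Pn ell_x w_nondeg).
Qed.
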